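(* Let $(\mathcal V,\otimes,\lambda)$ be a colax Monoidal category. The functor $\mathrm{Coalg}\to\mathrm{hCoalg}$ from the category of ordinary coalgebras in $\mathcal V$ to the category of homotopy coalgebras in $\mathcal V$, sending a coalgebra to its associated homotopy coalgebra and a coalgebra morphism $t:C\to G$ to the family $(t^{\otimes I}:C^{\otimes I}\to G^{\otimes I})_{I\in\mathbb N}$, is full and faithful.
   Context: $\mathcal O_{sk}$: objects $\mathbf n=\{1<\dots<n\}$, $n\ge0$ (identified with $n\in\mathbb N$), morphisms non-decreasing maps; $\sqcup$ ordered disjoint union; composition diagrammatic. $\mathcal V$ has structure morphisms $\lambda^\phi:\otimes^{j\in J}\otimes^{i\in\phi^{-1}j}X_i\to\otimes^{i\in I}X_i$ for $\phi:I\to J$ in $\mathcal O_{sk}$ (colax Monoidal: opposite of a lax Monoidal structure on $\mathcal V^{op}$). An ordinary coalgebra: $C$ with $\Delta_I:C\to C^{\otimes I}$, $\Delta_{\mathbf1}=\mathrm{id}$, $\Delta_I=\Delta_J(\otimes_j\Delta_{\phi^{-1}j})\lambda^\phi$ for all $\phi:I\to J$; a coalgebra morphism $t$ satisfies $\Delta_It^{\otimes I}=t\Delta_I$. A homotopy coalgebra $(C,\chi)$ is a functor $C:\mathcal O_{sk}^{op}\to\mathcal V$ with morphisms $\chi^I_{N_1,\dots,N_I}:\otimes^{i\in I}C(N_i)\to C(\sqcup_iN_i)$ natural in the $N_i$, $\chi^{\mathbf1}=\mathrm{id}$, $(\otimes^{j}\chi^{\phi^{-1}j})\chi^J=\lambda^\phi\chi^I$.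 A morphism $t:(C,\chi)\to(G,\gamma)$ in $\mathrm{hCoalg}$ is a family $t(k):C(k)\to G(k)$ natural in $\mathcal O_{sk}^{op}$ and with $\chi^I t=(\otimes^I t)\gamma^I$. The homotopy coalgebra associated with an ordinary coalgebra $C$ has $C(J)=C^{\otimes J}$, $C(\phi^{op})=(\otimes_j\Delta_{\phi^{-1}j})\lambda^\phi$, $\chi^I_{n_1,\dots,n_I}=\lambda^{\sqcup_i\mathbf n_i\to I}$. *)

From mathcomp Require Import all_boot.
Set Implicit Arguments. Unset Strict Implicit. Unset Printing Implicit Defensive.

(* ---------- The skeletal category O_sk ----------
   Objects: n : nat  (the ordered set {1<...<n}, indexed by 'I_n).
   A non-decreasing map phi : m -> n is encoded by its fiber sizes
   k : 'I_n -> nat (k j = #|phi^-1 j|), with m = \sum_j k j.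
   The fiber phi^-1 j is the interval of 'I_m given by [blk k j]. *)

Definition offs n (k : 'I_n -> nat) (j : 'I_n) : nat := \sum_(i < n | (i < j)%N) k i.

Lemma blk_proof n (k : 'I_n -> nat) (j : 'I_n) (a : 'I_(k j)) :
  (offs k j + a < \sum_(i < n) k i)%N.
Proof.
rewrite /offs [X in (_ < X)%N](bigID (fun i : 'I_n => (i < j)%N)) /= ltn_add2l.
rewrite (bigD1 j) ?ltnn //=.
by apply: (leq_trans (ltn_ord a)); apply: leq_addr.
Qed.

Definition blk n (k : 'I_n -> nat) (j : 'I_n) (a : 'I_(k j)) : 'I_(\sum_(i < n) k i) :=
  Ordinal (@blk_proof n k j a).
Arguments blk {n} k j a.
Lemma sum_blocks_nat (L K : nat -> nat) p :
  \sum_(c < p) \sum_(\sum_(i < c) L i <= j < \sum_(i < c) L i + L c) K j =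
  \sum_(0 <= j < \sum_(i < p) L i) K j.
Proof.
elim: p => [|p IH]; first by rewrite !big_ord0 big_geq.
rewrite big_ord_recr /= IH [in RHS]big_ord_recr /=.
by rewrite -big_cat_nat // leq_addr.
Qed.

Definition extn N (k : 'I_N -> nat) (j : nat) : nat :=
  if insub j is Some o then k o else 0.

Lemma extnE N (k : 'I_N -> nat) (o : 'I_N) : extn k o = k o.
Proof. by rewrite /extn valK. Qed.

Lemma offsE p (l : 'I_p -> nat) (c : 'I_p) : offs l c = \sum_(i < c) extn l i.
Proof.
rewrite /offs.
rewrite (eq_bigr (fun i : 'I_p => extn l i)); last by move=> i _; rewrite extnE.
rewrite -(big_mkord (fun i => i < c)) (big_cat_nat _ (n:=c)) //=; last exact: ltnW.
rewrite [X in _ + X]big_nat_cond [X in _ + X]big1 ?addn0; last first.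
  by move=> i /andP[/andP[ci _] ic]; move: ic; rewrite ltnNge ci.
rewrite big_mkord; apply: eq_bigl => i; exact: (ltn_ord i).
Qed.

Lemma sum_blk p (l : 'I_p -> nat) (k : 'I_(\sum_(c < p) l c) -> nat) :
  \sum_(c < p) \sum_(b < l c) k (blk l c b) = \sum_(j < \sum_(c < p) l c) k j.
Proof.
have eS : \sum_(c < p) l c = \sum_(i < p) extn l i.
  by apply: eq_bigr => i _; rewrite extnE.
transitivity (\sum_(0 <= j < \sum_(c < p) l c) extn k j); last first.
  by rewrite big_mkord; apply: eq_bigr => i _; rewrite extnE.
rewrite [X in \sum_(0 <= j < X) _]eS -sum_blocks_nat.
apply: eq_bigr => c _.
rewrite [in RHS](extnE l c) -offsE.
rewrite -{1}[offs l c]add0n big_addn addKn big_mkord.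
by apply: eq_bigr => b _; rewrite addnC -[offs l c + b]/(nat_of_ord (blk l c b)) extnE.
Qed.

(* For the composite I -f-> J -g-> K with fiber sizes k (of f) and l (of g),
   the composite g o f has fiber sizes [comp_sizes l k]; its source
   \sum_c comp_sizes l k c is identified with \sum_j k j (same set I). *)
Definition comp_sizes p (l : 'I_p -> nat) (k : 'I_(\sum_(c < p) l c) -> nat)
  : 'I_p -> nat := fun c => \sum_(b < l c) k (blk l c b).
Arguments comp_sizes {p} l k _.

Definition reidx p (l : 'I_p -> nat) (k : 'I_(\sum_(c < p) l c) -> nat)
  (i : 'I_(\sum_(c < p) comp_sizes l k c)) : 'I_(\sum_(j < \sum_(c < p) l c) k j) :=
  cast_ord (@sum_blk p l k) i.
Arguments reidx {p l k} i.

Record Cat := {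
  ob : Type;
  hom : ob -> ob -> Type;
  idm : forall X, hom X X;
  (* composition is written diagrammatically: comp f g = "f then g" *)
  comp : forall X Y Z, hom X Y -> hom Y Z -> hom X Z;
  comp_idl : forall X Y (f : hom X Y), comp (idm X) f = f;
  comp_idr : forall X Y (f : hom X Y), comp f (idm Y) = f;
  comp_assoc : forall X Y Z W (f : hom X Y) (g : hom Y Z) (h : hom Z W),
      comp (comp f g) h = comp f (comp g h) }.
Arguments hom {V} : rename.
Arguments idm {V} X : rename.
Arguments comp {V X Y Z} : rename.

Definition heq (V : Cat) (A B A' B' : ob V) (f : hom A B) (g : hom A' B') : Prop :=
  existT (fun p : ob V * ob V => hom p.1 p.2) (A, B) f =
  existT (fun p : ob V * ob V => hom p.1 p.2) (A', B') g.

(* tens0 n is used for n <> 1 ; for n = 1 the functor is the identity. *)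
Record Tensor (V : Cat) := {
  tens0 : forall n, ('I_n -> ob V) -> ob V;
  tensm0 : forall n (X Y : 'I_n -> ob V),
      (forall i, hom (X i) (Y i)) -> hom (tens0 X) (tens0 Y);
  tensm0_id : forall n (X : 'I_n -> ob V), tensm0 (fun i => idm (X i)) = idm (tens0 X);
  tensm0_comp : forall n (X Y Z : 'I_n -> ob V) (f : forall i, hom (X i) (Y i))
      (g : forall i, hom (Y i) (Z i)),
      tensm0 (fun i => comp (f i) (g i)) = comp (tensm0 f) (tensm0 g) }.

Definition tens (V : Cat) (T : Tensor V) (n : nat) : ('I_n -> ob V) -> ob V :=
  match n as n0 return ('I_n0 -> ob V) -> ob V with
  | 1 => fun X => X ord0
  | n0 => @tens0 V T n0
  end.

Definition tensm (V : Cat) (T : Tensor V) (n : nat) :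
  forall X Y : 'I_n -> ob V, (forall i, hom (X i) (Y i)) -> hom (tens T X) (tens T Y) :=
  match n as n0 return forall X Y : 'I_n0 -> ob V,
      (forall i, hom (X i) (Y i)) -> hom (tens T X) (tens T Y) with
  | 1 => fun X Y f => f ord0
  | n0 => fun X Y f => @tensm0 V T n0 X Y f
  end.
Arguments tens {V} T {n} X.
Arguments tensm {V} T {n X Y} f.

Definition tpow (V : Cat) (T : Tensor V) (n : nat) (C : ob V) : ob V :=
  tens T (fun _ : 'I_n => C).
Arguments tpow {V} T n C.

(* ---------- colax Monoidal structure ----------
   lam n k X = lambda^phi : (x)^{j in J} (x)^{i in phi^-1 j} X_i -> (x)^{i in I} X_i
   for phi : I -> J = n with fiber sizes k (I = \sum_j k j). *)
Record Colax (V : Cat) (T : Tensor V) := {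
  lam : forall n (k : 'I_n -> nat) (X : 'I_(\sum_(j < n) k j) -> ob V),
      hom (tens T (fun j => tens T (fun a => X (blk k j a)))) (tens T X);
  lam_nat : forall n (k : 'I_n -> nat) (X Y : 'I_(\sum_(j < n) k j) -> ob V)
      (f : forall i, hom (X i) (Y i)),
      comp (tensm T (fun j => tensm T (fun a => f (blk k j a)))) (@lam n k Y)
      = comp (@lam n k X) (tensm T f);
  lam_id : forall n (X : 'I_(\sum_(j < n) 1) -> ob V),
      heq (@lam n (fun _ : 'I_n => 1) X) (idm (tens T X));
  lam_to1 : forall (k : 'I_1 -> nat) (X : 'I_(\sum_(j < 1) k j) -> ob V),
      heq (@lam 1 k X) (idm (tens T X));
  (* coherence for composable I -f-> J -g-> K (f has fiber sizes k, g has l):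
     lambda^g . lambda^f = ((x)^{c in K} lambda^{f|}) . lambda^{g o f} *)
  lam_assoc : forall p (l : 'I_p -> nat) (k : 'I_(\sum_(c < p) l c) -> nat)
      (X : 'I_(\sum_(j < \sum_(c < p) l c) k j) -> ob V),
      heq (comp (@lam p l (fun j => tens T (fun a => X (blk k j a)))) (@lam _ k X))
          (comp (tensm T (fun c => @lam (l c) (fun b => k (blk l c b))
                                       (fun a => X (reidx (blk (comp_sizes l k) c a)))))
                (@lam p (comp_sizes l k) (fun i => X (reidx i)))) }.
Arguments lam {V T} _ {n} k X.

Record Coalg (V : Cat) (T : Tensor V) (L : Colax T) := {
  carrier : ob V;
  comul : forall n, hom carrier (tpow T n carrier);
  comul1 : comul 1 = idm carrier;
  comul_coass : forall n (k : 'I_n -> nat),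
      comul (\sum_(j < n) k j)
      = comp (comul n) (comp (tensm T (fun j => comul (k j)))
                             (lam L k (fun _ => carrier))) }.
Arguments carrier {V T L} _.
Arguments comul {V T L} _ n.

Definition is_coalg_mor (V : Cat) (T : Tensor V) (L : Colax T) (C G : Coalg L)
  (t : hom (carrier C) (carrier G)) : Prop :=
  forall n, comp (comul C n) (tensm T (fun _ : 'I_n => t)) = comp t (comul G n).

(* ---------- Homotopy coalgebras: underlying data ----------
   A homotopy coalgebra is a functor C : O_sk^op -> V (on objects hob, on the
   morphism phi : \sum_j k j -> n with fiber sizes k : hmap k) together with
   chi^I_{N_1..N_I} : (x)^{i in I} C(N_i) -> C(\sum_i N_i).  Morphisms in hCoalg
   only involve this data, so we record only the data here. *)
Record hdata (V : Cat) (T : Tensor V) := {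
  hob : nat -> ob V;
  hmap : forall n (k : 'I_n -> nat), hom (hob n) (hob (\sum_(j < n) k j));
  hchi : forall n (N : 'I_n -> nat), hom (tens T (fun i => hob (N i))) (hob (\sum_(i < n) N i)) }.
Arguments hob {V T} _ _.
Arguments hmap {V T} _ {n} k.
Arguments hchi {V T} _ {n} N.

Definition is_hcoalg_mor (V : Cat) (T : Tensor V) (C G : hdata T)
  (t : forall n, hom (hob C n) (hob G n)) : Prop :=
  (forall n (k : 'I_n -> nat), comp (hmap C k) (t (\sum_(j < n) k j)) = comp (t n) (hmap G k))
  /\ (forall n (N : 'I_n -> nat),
        comp (hchi C N) (t (\sum_(i < n) N i)) = comp (tensm T (fun i => t (N i))) (hchi G N)).

Definition assoc_h (V : Cat) (T : Tensor V) (L : Colax T) (C : Coalg L) : hdata T :=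
  {| hob := fun n => tpow T n (carrier C);
     hmap := fun n k => comp (tensm T (fun j => comul C (k j))) (lam L k (fun _ => carrier C));
     hchi := fun n N => lam L N (fun _ => carrier C) |}.

Definition assoc_mor (V : Cat) (T : Tensor V) (L : Colax T) (C G : Coalg L)
  (t : hom (carrier C) (carrier G)) : forall n, hom (tpow T n (carrier C)) (tpow T n (carrier G)) :=
  fun n => tensm T (fun _ : 'I_n => t).
Arguments is_coalg_mor {V T L} C G t.
Arguments assoc_mor {V T L} C G t n.
Arguments is_hcoalg_mor {V T} C G t.

From mathcomp Require Import all_boot.
From Stdlib Require Import Eqdep FunctionalExtensionality.

(* The component of t^{(x) -} at 1 is t itself, so the functor is faithful.
   For fullness, take t := s_1.  Compatibility of s with chi at N = (1,...,1),
   where chi = lambda^{id} = id, forces s_n = s_1^{(x) n}; naturality of s at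
   the unique map n -> 1, where lambda = id, is then exactly the equation
   Delta_n . s_1^{(x) n} = s_1 . Delta_n. *)

Lemma heq_idm (V : Cat) (A : ob V) (f : hom A A) : heq f (idm A) -> f = idm A.
Proof. exact: Eqdep.EqdepTheory.inj_pair2. Qed.

Section AssocFullyFaithful.
Variables (V : Cat) (T : Tensor V) (L : Colax T) (C G : Coalg L).

Lemma assoc_mor_inj : injective (assoc_mor C G).
Proof. by move=> t t' /(congr1 (fun F => F 1)). Qed.

Variable s : forall n, hom (hob (assoc_h C) n) (hob (assoc_h G) n).
Hypothesis s_hmor : is_hcoalg_mor (assoc_h C) (assoc_h G) s.

(* In both proofs below the index \sum_j _ is equal to n only propositionally:
   it is generalized to n before lambda is replaced by the identity. *)
Lemma hcoalg_mor_tpow n : s n = tensm T (fun _ : 'I_n => s 1).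
Proof.
have := s_hmor.2 n (fun _ => 1) => /=.
have lamC := @lam_id _ _ L n (fun _ => carrier C).
have lamG := @lam_id _ _ L n (fun _ => carrier G).
move: (lam L _ _) lamC (lam L _ _) lamG.
have : \sum_(i < n) 1 = n by rewrite sum1_card card_ord.
move: (\sum_(i < n) 1) => m eq_mn; subst m.
move=> lC /heq_idm -> lG /heq_idm ->.
by rewrite comp_idl comp_idr.
Qed.

Lemma hcoalg_mor_assoc : assoc_mor C G (s 1) = s.
Proof.
by apply: functional_extensionality_dep => n; rewrite [RHS]hcoalg_mor_tpow.
Qed.

Lemma hcoalg_mor_coalg : is_coalg_mor C G (s 1).
Proof.
move=> n; have := s_hmor.1 1 (fun _ => n) => /=.
rewrite hcoalg_mor_tpow.
have lamC := @lam_to1 _ _ L (fun _ => n) (fun _ => carrier C).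
have lamG := @lam_to1 _ _ L (fun _ => n) (fun _ => carrier G).
move: (lam L _ _) lamC (lam L _ _) lamG.
have : \sum_(j < 1) n = n by rewrite big_ord1.
move: (\sum_(j < 1) n) => m eq_mn; subst m.
move=> lC /heq_idm -> lG /heq_idm ->.
by rewrite !comp_idr.
Qed.

End AssocFullyFaithful.

Theorem mainTheorem4 (V : Cat) (T : Tensor V) (L : Colax T) (C G : Coalg L) :
  (forall t t' : hom (carrier C) (carrier G),
      is_coalg_mor C G t -> is_coalg_mor C G t' ->
      assoc_mor C G t = assoc_mor C G t' -> t = t')
  /\
  (forall s : forall n, hom (hob (assoc_h C) n) (hob (assoc_h G) n),
      is_hcoalg_mor (assoc_h C) (assoc_h G) s ->
      exists t : hom (carrier C) (carrier G),
        is_coalg_mor C G t /\ assoc_mor C G t = s).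
Proof.
split; first by move=> t t' _ _; apply: assoc_mor_inj.
move=> s s_hmor; exists (s 1); split.
- exact: hcoalg_mor_coalg.
- exact: hcoalg_mor_assoc.
Qed.
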